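(* Let $\mathcal{A}=\sum_{i=1}^r\lambda_i u_i\otimes u_i\otimes\bar u_i\otimes\bar u_i$ be a CPS tensor with $0\neq\lambda_i\in\mathbb{R}$ and $u_i\in\mathbb{C}^n$, and let $U=\{u_1,\dots,u_r\}$. If $2k_U\ge r+2$, where $k_U$ is the Kruskal rank of $U$, then $rank_{cps}(\mathcal{A})=r$, and the CPS rank decomposition of $\mathcal{A}$ is unique up to permutation of the terms and scaling of the decomposing vectors.
   Context: A tensor $\mathcal{A}\in\mathbb{C}^{n\times n\times n\times n}$ is conjugate partial-symmetric (CPS) if $\mathcal{A}_{ijkl}=\overline{\mathcal{A}_{klij}}$ and $\mathcal{A}_{ijkl}=\mathcal{A}_{jikl}=\mathcal{A}_{ijlk}$ for all indices. The CPS rank $rank_{cps}(\mathcal{A})$ is the smallest $r$ such that $\mathcal{A}=\sum_{i=1}^r\lambda_i a_i\otimes a_i\otimes\bar a_i\otimes\bar a_i$ with $\lambda_i\in\mathbb{R}$, $a_i\in\mathbb{C}^n$; such a decomposition with $r=rank_{cps}(\mathcal{A})$ terms is a CPS rank decomposition. The Kruskal rank $k_U$ of a finite set of vectors $U$ is the largest $k$ such that every subset of $k$ vectors of $U$ is linearly independent. *)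

From HB Require Import structures.
From mathcomp Require Import all_boot all_order all_algebra.
From mathcomp Require Import fingroup perm complex reals.
Set Implicit Arguments. Unset Strict Implicit. Unset Printing Implicit Defensive.
Import Order.TTheory GRing.Theory Num.Theory.
Local Open Scope ring_scope.

Definition tensor4 (R : realType) (n : nat) := 'I_n -> 'I_n -> 'I_n -> 'I_n -> R[i].

Definition is_cps (R : realType) (n : nat) (A : tensor4 R n) : Prop :=
  forall i j k l,
    A i j k l = (A k l i j)^* /\ A i j k l = A j i k l /\ A i j k l = A i j l k.

Definition cps_sum (R : realType) (n r : nat) (lam : 'I_r -> R)
    (a : 'I_r -> 'rV[R[i]]_n) : tensor4 R n :=
  fun i j k l =>
    \sum_(s < r) ((lam s)%:C)%C * a s 0 i * a s 0 j * (a s 0 k)^* * (a s 0 l)^*.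

Definition has_cps_decomp (R : realType) (n : nat) (A : tensor4 R n) (r : nat) : Prop :=
  exists (lam : 'I_r -> R) (a : 'I_r -> 'rV[R[i]]_n), A = cps_sum lam a.

Definition cps_rank_is (R : realType) (n : nat) (A : tensor4 R n) (r : nat) : Prop :=
  has_cps_decomp A r /\ (forall m, (m < r)%N -> ~ has_cps_decomp A m).

Definition kruskal_rank (F : fieldType) (n r : nat) (u : 'I_r -> 'rV[F]_n) : nat :=
  \max_(k < r.+1 | [forall S : {set 'I_r}, (#|S| == k) ==> free [seq u s | s in S]]) k.

(* Flatten the tensor to the (n^2 x n^2) matrix W_u^T diag(lam) conj(W_u), where
   W_u has rows u_s (x) u_s.  For weights x, the combination x W_u is the vectorisation
   of G_x = \sum_s x_s u_s^T u_s, and Frobenius' rank inequality combined with the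
   Kruskal rank gives rank G_x >= min(|supp x|, 2) as soon as 2 k_U >= r + 2.  So W_u
   has independent rows, the flattening has rank r, and no decomposition with fewer
   terms exists.  For another decomposition with vectors v_t, each v_t (x) v_t lies in
   the row space of W_u; being of rank one it is then a multiple of a single
   u_s (x) u_s, which yields the permutation, and the weights agree because W_u is
   row-free. *)

From HB Require Import structures.
From mathcomp Require Import all_boot all_order all_algebra.
From mathcomp Require Import fingroup perm complex reals.
From mathcomp Require Import ring zify.
Import Order.TTheory GRing.Theory Num.Theory.
Local Open Scope ring_scope.
Set Implicit Arguments. Unset Strict Implicit. Unset Printing Implicit Defensive.

Lemma subset_of_card (T : finType) (A : {set T}) k :
  (k <= #|A|)%N -> exists2 B : {set T}, B \subset A & #|B| = k.
Proof.
case/card_geqP=> s [s_uniq size_s sA]; exists [set x in s].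
  by apply/subsetP=> x; rewrite inE => /sA.
by rewrite cardsE (card_uniqP s_uniq).
Qed.

Section KruskalRank.
Variables (F : fieldType) (n : nat).

Definition lin_indep_on r (a : 'I_r -> 'rV[F]_n) (T : {set 'I_r}) : Prop :=
  forall c : 'I_r -> F, \sum_(s in T) c s *: a s = 0 -> {in T, forall s, c s = 0}.

Lemma free_lin_indep_on r (a : 'I_r -> 'rV[F]_n) (T : {set 'I_r}) :
  free [seq a s | s in T] -> lin_indep_on a T.
Proof.
move=> aT_free c ca0 s sT; set X := [seq a s | s in T] in aT_free.
have /freeP X_free := (aT_free : free (in_tuple X)).
have size_X : size X = size (enum T) by rewrite size_map.
have s_idx : (index s (enum T) < size X)%N by rewrite size_X index_mem mem_enum.
rewrite -(nth_index s (_ : s \in enum T)) ?mem_enum //.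
apply: (X_free (fun i => c (nth s (enum T) i)) _ (Ordinal s_idx)).
rewrite -(big_mkord xpredT (fun i => c (nth s (enum T) i) *: X`_i)) size_X.
rewrite -[RHS]ca0 -big_enum /= (big_nth s); apply: eq_big_nat => i /andP[_ ltiT].
by rewrite /X (nth_map s).
Qed.

Lemma lin_indep_onS r (a : 'I_r -> 'rV[F]_n) (T T' : {set 'I_r}) :
  T \subset T' -> lin_indep_on a T' -> lin_indep_on a T.
Proof.
move=> sTT' aT' c ca0 s sT; pose c' s := if s \in T then c s else 0.
suff: c' s = 0 by rewrite /c' sT.
apply: (aT' c' _ s (subsetP sTT' s sT)); rewrite -[RHS]ca0 big_mkcond [RHS]big_mkcond /=.
apply: eq_bigr => x _; rewrite /c'.
have [xT | _] := boolP (x \in T); first by rewrite (subsetP sTT' x xT).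
by case: (x \in T'); rewrite ?scale0r.
Qed.

Lemma kruskal_rank_spec r (u : 'I_r -> 'rV[F]_n) :
  (kruskal_rank u <= r)%N /\
  forall S : {set 'I_r}, #|S| = kruskal_rank u -> free [seq u s | s in S].
Proof.
set P := fun k : 'I_r.+1 =>
  [forall S : {set 'I_r}, (#|S| == k) ==> free [seq u s | s in S]].
have P0 : P ord0.
  apply/forallP=> S; apply/implyP=> /eqP/cards0_eq ->.
  rewrite (_ : [seq u s | s in set0] = [::]) ?nil_free //.
  by apply: size0nil; rewrite size_map -cardE cards0.
have [k Pk max_k] : {k : 'I_r.+1 | P k & \max_(i | P i) i = k}.
  by apply: eq_bigmax_cond; apply/card_gt0P; exists ord0.
have -> : kruskal_rank u = k by exact: max_k.
split=> [|S cardS]; first by rewrite -ltnS ltn_ord.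
by move/forallP: Pk => /(_ S)/implyP; apply; rewrite cardS.
Qed.

Lemma lin_indep_on_kruskal r (u : 'I_r -> 'rV[F]_n) (T : {set 'I_r}) :
  (#|T| <= kruskal_rank u)%N -> lin_indep_on u T.
Proof.
move=> leTk; have [le_kr ku_free] := kruskal_rank_spec u.
have [S sSTc cardS] :
    exists2 S : {set 'I_r}, S \subset ~: T & #|S| = (kruskal_rank u - #|T|)%N.
  by apply: subset_of_card; rewrite cardsCs card_ord; lia.
apply: (lin_indep_onS (subsetUl T S)).
apply/free_lin_indep_on/ku_free.
rewrite cardsU cardS (_ : T :&: S = set0) ?cards0; first lia.
by apply/disjoint_setI0; rewrite disjoint_sym disjoints_subset.
Qed.

End KruskalRank.

Section WeightedGram.
Variables (F : fieldType) (n : nat).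

Definition row_supp m (x : 'rV[F]_m) : {set 'I_m} := [set s | x 0 s != 0].

Lemma row_supp_eq0 m (x : 'rV[F]_m) : (row_supp x == set0) = (x == 0).
Proof.
apply/eqP/eqP=> [/setP supp0 | ->]; last by apply/setP=> s; rewrite !inE mxE eqxx.
by apply/rowP=> s; move: (supp0 s); rewrite !inE mxE => /negbFE/eqP.
Qed.

Lemma rank_diag_mx_leq m (x : 'rV[F]_m) : (\rank (diag_mx x) <= #|row_supp x|)%N.
Proof.
rewrite diag_mx_sum_delta (bigID (mem (row_supp x))) /= [X in _ + X]big1 ?addr0.
  rewrite -sum1_card; elim/big_ind2: _ => [|A1 k1 A2 k2 le1 le2|s _].
  - by rewrite mxrank0.
  - exact: leq_trans (mxrank_add _ _) (leq_add le1 le2).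
  by rewrite -mul_scalar_mx (leq_trans (mxrankM_maxr _ _)) ?mxrank_delta.
by move=> s; rewrite inE negbK => /eqP ->; rewrite scale0r.
Qed.

Lemma rank_diag_mul_geq r (a : 'I_r -> 'rV[F]_n) (x : 'rV[F]_r) (T : {set 'I_r}) :
  T \subset row_supp x -> lin_indep_on a T ->
  (#|T| <= \rank (diag_mx x *m \matrix_s a s))%N.
Proof.
move=> sTx aT; have [-> | [s0 s0T]] := set_0Vmem T; first by rewrite cards0.
pose M := rowsub (enum_val : 'I_#|T| -> 'I_r) (diag_mx x *m \matrix_s a s).
suff M_free : row_free M by rewrite -(eqP M_free) /M rowsubE mxrankM_maxr.
apply/inj_row_free=> y yM0.
pose c s := y 0 (enum_rank_in s0T s) * x 0 s.
have : \sum_(s in T) c s *: a s = 0.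
  rewrite big_enum_val -[RHS]yM0; apply/rowP=> j; rewrite !mxE summxE.
  apply: eq_bigr => i _; rewrite !mxE /c enum_valK_in.
  rewrite (bigD1 (enum_val i)) //= big1 => [|k /negPf nk]; last first.
    by rewrite !mxE eq_sym nk mulr0n mul0r.
  by rewrite !mxE eqxx mulr1n addr0 mulrA.
move/aT=> c0; apply/rowP=> i; move/eqP: (c0 _ (enum_valP i)).
rewrite /c enum_valK_in mxE mulf_eq0 => /orP[/eqP // |].
by have := subsetP sTx _ (enum_valP i); rewrite inE => /negPf ->.
Qed.

Definition weighted_gram m (a : 'I_m -> 'rV[F]_n) (x : 'rV[F]_m) : 'M[F]_n :=
  (\matrix_s a s)^T *m diag_mx x *m \matrix_s a s.

Lemma rank_weighted_gram_geq r (u : 'I_r -> 'rV[F]_n) (x : 'rV[F]_r) :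
  (2 * minn #|row_supp x| (kruskal_rank u) <=
   \rank (weighted_gram u x) + #|row_supp x|)%N.
Proof.
rewrite /weighted_gram; set B := \matrix_s u s.
have [T sTx cardT] := subset_of_card (geq_minl #|row_supp x| (kruskal_rank u)).
have uT : lin_indep_on u T by apply: lin_indep_on_kruskal; rewrite cardT geq_minr.
have rank_xB : (#|T| <= \rank (diag_mx x *m B))%N := rank_diag_mul_geq sTx uT.
have rank_x := rank_diag_mx_leq x.
have rank_Bx : \rank (B^T *m diag_mx x) = \rank (diag_mx x *m B).
  by rewrite -mxrank_tr trmx_mul tr_diag_mx trmxK.
have := mxrank_Frobenius B^T (diag_mx x) B; rewrite rank_Bx cardT in rank_xB *.
lia.
Qed.

Lemma rank_weighted_gram_geq_min2 r (u : 'I_r -> 'rV[F]_n) (x : 'rV[F]_r) :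
  (r + 2 <= 2 * kruskal_rank u)%N ->
  (minn #|row_supp x| 2 <= \rank (weighted_gram u x))%N.
Proof.
move=> hk; have := rank_weighted_gram_geq u x.
have := subset_leq_card (subsetT (row_supp x)); rewrite cardsT card_ord; lia.
Qed.

End WeightedGram.

Section KroneckerSquares.
Variables (F : fieldType) (n : nat).

Lemma row_supp_set1 m (x : 'rV[F]_m) s : row_supp x = [set s] -> x = x 0 s *: 'e_s.
Proof.
move/setP=> supp_x; apply/rowP=> t; rewrite !mxE eqxx /=.
have [-> | ts] := eqVneq t s; first by rewrite mulr1.
by move: (supp_x t); rewrite !inE (negPf ts) mulr0 => /negbFE/eqP.
Qed.

Lemma row_free_rowZ_inj m p (M : 'M[F]_(m, p)) t1 t2 (c : F) :
  row_free M -> row t1 M = c *: row t2 M -> t1 = t2.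
Proof.
move=> M_free rowM; apply/eqP/contraT=> t12.
have : ('e_t1 - c *: 'e_t2 : 'rV_m) *m M == 0.
  by rewrite mulmxBl -scalemxAl -!rowE rowM subrr.
rewrite mulmx_free_eq0 // => /eqP/rowP/(_ t1)/eqP.
by rewrite !mxE !eqxx (negPf t12) /= mulr0 subr0 oner_eq0.
Qed.

Lemma tr_mul_self_eq0 (w : 'rV[F]_n) : (w^T *m w == 0) = (w == 0).
Proof.
apply/eqP/eqP=> [ww0 | ->]; last by rewrite mulmx0.
apply/rowP=> i; move/matrixP/(_ i i): ww0.
by rewrite !mxE big_ord1 !mxE => /eqP; rewrite mulf_eq0 orbb => /eqP.
Qed.

Lemma tr_mul_self_eqZ (v w : 'rV[F]_n) (a : F) :
  w != 0 -> w^T *m w = a *: (v^T *m v) -> exists2 c, c != 0 & w = c *: v.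
Proof.
move=> w_neq0 /matrixP ww; have {}ww i j : w 0 i * w 0 j = a * (v 0 i * v 0 j).
  by move: (ww i j); rewrite !mxE !big_ord1 !mxE.
have [i0 wi0] : exists i, w 0 i != 0.
  by apply/existsP; apply: contraNT w_neq0 => /existsPn w0; apply/eqP/rowP=> i;
    rewrite mxE; apply/eqP/negPn.
have vi0 : v 0 i0 != 0.
  by apply: contraNneq wi0 => v0; move: (ww i0 i0); rewrite v0 !mul0r mulr0 => /eqP;
    rewrite mulf_eq0 orbb.
exists (w 0 i0 / v 0 i0); first by rewrite mulf_neq0 ?invr_eq0.
apply/rowP=> i; rewrite mxE; apply: (mulIf wi0).
have -> : w 0 i0 / v 0 i0 * v 0 i * w 0 i0 = w 0 i0 * w 0 i0 * v 0 i / v 0 i0 by ring.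
by rewrite ww (mulrC (w 0 i)) ww; field.
Qed.

Definition kronsq_mx m (a : 'I_m -> 'rV[F]_n) : 'M[F]_(m, n * n) :=
  \matrix_s mxvec ((a s)^T *m a s).

Lemma kronsq_mxE m (a : 'I_m -> 'rV[F]_n) s i j :
  kronsq_mx a s (mxvec_index i j) = a s 0 i * a s 0 j.
Proof. by rewrite mxE mxvecE mxE big_ord1 !mxE. Qed.

Lemma mul_row_kronsq_mx m (a : 'I_m -> 'rV[F]_n) (x : 'rV[F]_m) :
  x *m kronsq_mx a = mxvec (weighted_gram a x).
Proof.
apply/rowP=> k; case/mxvec_indexP: k => i j; rewrite mxvecE !mxE.
by apply: eq_bigr => s _; rewrite kronsq_mxE mul_mx_diag !mxE; ring.
Qed.

Lemma row_kronsq_mx_inj m (a : 'I_m -> 'rV[F]_n) t1 t2 (c : F) :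
  row_free (kronsq_mx a) -> a t1 = c *: a t2 -> t1 = t2.
Proof.
move=> a_free a12; apply: (row_free_rowZ_inj (c := c ^+ 2) a_free).
by rewrite !rowK a12 -scalemxAr [(c *: _)^T]linearZ /= -scalemxAl scalerA linearZ.
Qed.

Variables (r : nat) (u : 'I_r -> 'rV[F]_n).
Hypothesis kruskal_u : (r + 2 <= 2 * kruskal_rank u)%N.

Lemma row_free_kronsq_mx : row_free (kronsq_mx u).
Proof.
apply/inj_row_free=> x xu0; apply/eqP; rewrite -row_supp_eq0 -cards_eq0.
have := rank_weighted_gram_geq_min2 x kruskal_u.
suff -> : weighted_gram u x = 0 by rewrite mxrank0; lia.
by apply/eqP; rewrite -mxvec_eq0 -mul_row_kronsq_mx xu0.
Qed.

(* [w^T w] has rank at most one, so by the Kruskal bound its coefficient row [x]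
   has a single nonzero entry. *)
Lemma sub_kronsq_mx_scale (w : 'rV[F]_n) :
  w != 0 -> (mxvec (w^T *m w) <= kronsq_mx u)%MS ->
  exists s, exists2 c, c != 0 & w = c *: u s.
Proof.
move=> w_neq0 /submxP[x wx].
have gram_w : w^T *m w = weighted_gram u x.
  by apply: (can_inj mxvecK); rewrite -mul_row_kronsq_mx.
have x_neq0 : x != 0.
  by apply: contra_neq w_neq0 => x0; apply/eqP; rewrite -tr_mul_self_eq0 gram_w x0
    -mxvec_eq0 -mul_row_kronsq_mx mul0mx.
have /cards1P[s supp_x] : #|row_supp x| == 1%N.
  have := rank_weighted_gram_geq_min2 x kruskal_u; rewrite -gram_w.
  have : (\rank (w^T *m w) <= 1)%N by rewrite (leq_trans (mxrankM_maxl _ _)) ?rank_leq_col.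
  by move: x_neq0; rewrite -row_supp_eq0 -cards_eq0; lia.
exists s; apply: (tr_mul_self_eqZ (a := x 0 s)) => //; apply: (can_inj mxvecK).
by rewrite wx {1}(row_supp_set1 supp_x) -scalemxAl -rowE rowK linearZ.
Qed.

End KroneckerSquares.

Section CpsUnfolding.
Variables (C : numClosedFieldType) (n : nat).

Definition cps_unfolding m (d : 'rV[C]_m) (a : 'I_m -> 'rV[C]_n) : 'M[C]_(n * n) :=
  (kronsq_mx a)^T *m diag_mx d *m map_mx Num.conj (kronsq_mx a).

Lemma cps_unfoldingE m (d : 'rV[C]_m) (a : 'I_m -> 'rV[C]_n) i j k l :
  cps_unfolding d a (mxvec_index i j) (mxvec_index k l) =
  \sum_(s < m) d 0 s * a s 0 i * a s 0 j * (a s 0 k)^* * (a s 0 l)^*.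
Proof.
rewrite /cps_unfolding mul_mx_diag mxE; apply: eq_bigr => s _.
by rewrite !mxE !mxvecE !mxE !big_ord1 !mxE rmorphM /=; ring.
Qed.

Lemma rank_cps_unfolding_leq m (d : 'rV[C]_m) (a : 'I_m -> 'rV[C]_n) :
  (\rank (cps_unfolding d a) <= m)%N.
Proof.
rewrite (leq_trans (mxrankM_maxl _ _)) // (leq_trans (mxrankM_maxl _ _)) //.
exact: rank_leq_col.
Qed.

Lemma tr_cps_unfolding_sub m (d : 'rV[C]_m) (a : 'I_m -> 'rV[C]_n) :
  ((cps_unfolding d a)^T <= kronsq_mx a)%MS.
Proof. by rewrite !trmx_mul trmxK mulmxA submxMl. Qed.

Lemma rank_cps_unfolding m (d : 'rV[C]_m) (a : 'I_m -> 'rV[C]_n) :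
  row_free (kronsq_mx a) -> (forall s, d 0 s != 0) -> \rank (cps_unfolding d a) = m.
Proof.
move=> a_free d_neq0; have d_unit : diag_mx d \in unitmx.
  by rewrite unitmxE det_diag unitfE; apply/prodf_neq0 => s _.
rewrite -mxrank_tr /cps_unfolding -mulmxA trmx_mul trmxK mxrankMfree // mxrank_tr.
by rewrite mxrankMfree ?row_free_map // mxrank_unit.
Qed.

Lemma cps_unfolding_weights_inj m (d d' : 'rV[C]_m) (a : 'I_m -> 'rV[C]_n) :
  row_free (kronsq_mx a) -> cps_unfolding d a = cps_unfolding d' a -> d = d'.
Proof.
move=> a_free; rewrite /cps_unfolding -!mulmxA => /(congr1 trmx).
rewrite !trmx_mul trmxK => /(row_free_inj a_free)/(congr1 trmx).
have conj_a_free : row_free (map_mx Num.conj (kronsq_mx a)) by rewrite row_free_map.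
rewrite !trmx_mul !trmxK => /(row_free_inj conj_a_free)/matrixP dd'.
by apply/rowP=> s; move: (dd' s s); rewrite !mxE eqxx !mulr1n.
Qed.

Lemma cps_unfolding_perm_scale m (e : 'rV[C]_m) (u v : 'I_m -> 'rV[C]_n)
    (sigma : 'S_m) (c : 'I_m -> C) :
  (forall s, v (sigma s) = c s *: u s) ->
  cps_unfolding e v = cps_unfolding (\row_s (e 0 (sigma s) * (c s * (c s)^*) ^+ 2)) u.
Proof.
move=> vu; apply/matrixP=> x y; case/mxvec_indexP: x => i j; case/mxvec_indexP: y => k l.
rewrite !cps_unfoldingE (reindex_inj (@perm_inj _ sigma)) /=; apply: eq_bigr => s _.
by rewrite vu !mxE !rmorphM /=; ring.
Qed.

Variables (r : nat) (u : 'I_r -> 'rV[C]_n) (d : 'rV[C]_r).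
Hypotheses (kruskal_u : (r + 2 <= 2 * kruskal_rank u)%N) (d_neq0 : forall s, d 0 s != 0).

(* Both Kronecker-square matrices share the row space of the transposed flattening,
   which has rank [r]. *)
Lemma eqmx_kronsq_cps_unfolding (e : 'rV[C]_r) (v : 'I_r -> 'rV[C]_n) :
  cps_unfolding e v = cps_unfolding d u -> (kronsq_mx v == kronsq_mx u)%MS.
Proof.
move=> evdu; have u_free := row_free_kronsq_mx kruskal_u.
have rank_T : \rank (cps_unfolding d u)^T = r by rewrite mxrank_tr rank_cps_unfolding.
have := tr_cps_unfolding_sub e v; rewrite evdu => sub_Tv.
have sub_vT : (kronsq_mx v <= (cps_unfolding d u)^T)%MS.
  by rewrite -(geq_leqif (mxrank_leqif_sup sub_Tv)) rank_T rank_leq_row.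
have sub_vu := submx_trans sub_vT (tr_cps_unfolding_sub d u).
rewrite -(geq_leqif (mxrank_leqif_eq sub_vu)) (eqP u_free).
by move: (mxrankS sub_Tv); rewrite rank_T.
Qed.

Lemma cps_unfolding_match (e : 'rV[C]_r) (v : 'I_r -> 'rV[C]_n) :
  cps_unfolding e v = cps_unfolding d u ->
  exists sigma : 'S_r, forall s, exists2 c, c != 0 & v (sigma s) = c *: u s.
Proof.
move=> evdu; have /andP[sub_vu _] := eqmx_kronsq_cps_unfolding evdu.
have v_free : row_free (kronsq_mx v).
  rewrite /row_free (eqmx_rank (eqmx_kronsq_cps_unfolding evdu)).
  exact: row_free_kronsq_mx.
have v_neq0 t : v t != 0.
  apply: contraTneq v_free => vt0; apply/negP=> v_free.
  have := mulmx_free_eq0 ('e_t : 'rV_r) v_free.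
  rewrite -rowE rowK vt0 mulmx0 linear0 eqxx.
  by move/esym/eqP/rowP/(_ t)/eqP; rewrite !mxE !eqxx oner_eq0.
have match_t t : exists s, exists2 c, c != 0 & v t = c *: u s.
  have := submx_trans (row_sub t (kronsq_mx v)) sub_vu; rewrite rowK.
  by move/(sub_kronsq_mx_scale kruskal_u (v_neq0 t)).
have [f fP] := fin_all_exists match_t.
have f_inj : injective f.
  move=> t1 t2 f12; have [c1 c1_neq0 v1] := fP t1; have [c2 c2_neq0 v2] := fP t2.
  by apply: (row_kronsq_mx_inj (c := c1 / c2) v_free); rewrite v1 v2 f12 scalerA divfK.
exists (perm f_inj)^-1%g => s.
by have := fP ((perm f_inj)^-1%g s); rewrite -(permE f_inj) permKV.
Qed.

Lemma cps_unfolding_unique (e : 'rV[C]_r) (v : 'I_r -> 'rV[C]_n) :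
  cps_unfolding e v = cps_unfolding d u ->
  exists sigma : 'S_r, forall s, exists c,
    [/\ c != 0, v (sigma s) = c *: u s & e 0 (sigma s) * (c * c^*) ^+ 2 = d 0 s].
Proof.
move=> evdu; have [sigma match_s] := cps_unfolding_match evdu.
have [c c_neq0 vu] := fin_all_exists2 match_s.
have := cps_unfolding_perm_scale e vu; rewrite evdu.
move/esym/(cps_unfolding_weights_inj (row_free_kronsq_mx kruskal_u))/rowP=> ed.
by exists sigma => s; exists (c s); split=> //; move: (ed s); rewrite mxE.
Qed.

End CpsUnfolding.

Section CpsTensors.
Variables (R : realType) (n : nat).

Definition complex_weights m (lam : 'I_m -> R) : 'rV[R[i]]_m := \row_s ((lam s)%:C)%C.

Lemma cps_unfolding_cps_sum m (lam : 'I_m -> R) (a : 'I_m -> 'rV[R[i]]_n) i j k l :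
  cps_unfolding (complex_weights lam) a (mxvec_index i j) (mxvec_index k l) =
  cps_sum lam a i j k l.
Proof. by rewrite cps_unfoldingE; apply: eq_bigr => s _; rewrite mxE. Qed.

Lemma cps_unfolding_eq m m' (lam : 'I_m -> R) (a : 'I_m -> 'rV[R[i]]_n)
    (mu : 'I_m' -> R) (b : 'I_m' -> 'rV[R[i]]_n) :
  cps_sum lam a = cps_sum mu b ->
  cps_unfolding (complex_weights lam) a = cps_unfolding (complex_weights mu) b.
Proof.
move=> ab; apply/matrixP=> x y; case/mxvec_indexP: x => i j; case/mxvec_indexP: y => k l.
by rewrite !cps_unfolding_cps_sum ab.
Qed.

Variables (r : nat) (lam : 'I_r -> R) (u : 'I_r -> 'rV[R[i]]_n).
Hypotheses (lam_neq0 : forall s, lam s != 0) (kruskal_u : (r + 2 <= 2 * kruskal_rank u)%N).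

Lemma complex_weights_neq0 s : complex_weights lam 0 s != 0.
Proof. by rewrite mxE fmorph_eq0. Qed.

Lemma cps_rank_kruskal : cps_rank_is (cps_sum lam u) r.
Proof.
split=> [|m ltmr [mu [a lam_u_mu_a]]]; first by exists lam, u.
have := rank_cps_unfolding_leq (complex_weights mu) a.
rewrite -(cps_unfolding_eq lam_u_mu_a) rank_cps_unfolding //.
- by rewrite leqNgt ltmr.
- exact: row_free_kronsq_mx.
- exact: complex_weights_neq0.
Qed.

End CpsTensors.

Theorem proposition3p2 (R : realType) (n r : nat)
    (lam : 'I_r -> R) (u : 'I_r -> 'rV[R[i]]_n) :
  (forall s, lam s != 0) ->
  (r + 2 <= 2 * kruskal_rank u)%N ->
  cps_rank_is (cps_sum lam u) r /\
  (forall (mu : 'I_r -> R) (v : 'I_r -> 'rV[R[i]]_n),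
     cps_sum mu v = cps_sum lam u ->
     exists sigma : 'S_r, forall s : 'I_r,
       exists c : R[i], c != 0 /\ v (sigma s) = c *: u s /\
         ((mu (sigma s))%:C)%C * (c * c^*) ^+ 2 = ((lam s)%:C)%C).
Proof.
move=> lam_neq0 kruskal_u; split; first exact: cps_rank_kruskal.
move=> mu v /cps_unfolding_eq.
case/(cps_unfolding_unique kruskal_u (complex_weights_neq0 lam_neq0))=> sigma unique_s.
exists sigma => s; have [c [c_neq0 vu weights]] := unique_s s.
by exists c; move: weights; rewrite !mxE.
Qed.
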